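(* Let $V$ be a real vector space with inner products $\langle\cdot,\cdot\rangle_1,\langle\cdot,\cdot\rangle_2$ and induced norms $\|\cdot\|_1,\|\cdot\|_2$. Suppose at least one of the following holds: (1) $\langle\cdot,\cdot\rangle_2=c\langle\cdot,\cdot\rangle_1$ for some $c>0$; (2) $\|\cdot\|_2=c\|\cdot\|_1$ for some $c>0$; (3) the two inner products give the same angle between every pair of nonzero vectors; (4) for all nonzero $x,y$, $\langle x,y\rangle_1=0\iff\langle x,y\rangle_2=0$; (5) for some $\theta_0\in(0,\pi)$, for all nonzero $x,y$ the angle between $x,y$ with respect to $\langle\cdot,\cdot\rangle_1$ is $\theta_0$ iff it is $\theta_0$ with respect to $\langle\cdot,\cdot\rangle_2$. If moreover there is a nonzero $x\in V$ with $\|x\|_1=\|x\|_2$, then $\langle\cdot,\cdot\rangle_1=\langle\cdot,\cdot\rangle_2$.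
   Context: For an inner product $\langle\cdot,\cdot\rangle$ on a real vector space with norm $\|x\|=\sqrt{\langle x,x\rangle}$, the angle between nonzero vectors $x,y$ is the unique $\theta\in[0,\pi]$ with $\cos\theta=\langle x,y\rangle/(\|x\|\|y\|)$. *)

From HB Require Import structures.
From mathcomp Require Import all_boot all_order all_algebra.
From mathcomp Require Import all_classical all_reals all_analysis.
Set Implicit Arguments. Unset Strict Implicit. Unset Printing Implicit Defensive.
Import Order.TTheory GRing.Theory Num.Theory.
Local Open Scope ring_scope.

Definition is_inner_product (R : realType) (V : lmodType R) (ip : V -> V -> R) : Prop :=
  [/\ (forall x y, ip x y = ip y x),
      (forall a x y z, ip (a *: x + y) z = a * ip x z + ip y z)
    & (forall x, x != 0 -> 0 < ip x x)].

Definition ipnorm (R : realType) (V : lmodType R) (ip : V -> V -> R) (x : V) : R :=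
  Num.sqrt (ip x x).

Definition ipangle (R : realType) (V : lmodType R) (ip : V -> V -> R) (x y : V) : R :=
  acos (ip x y / (ipnorm ip x * ipnorm ip y)).

From HB Require Import structures.
From mathcomp Require Import all_boot all_order all_algebra.
From mathcomp Require Import all_classical all_reals all_analysis.
From mathcomp Require Import ring lra.
Import Order.TTheory GRing.Theory Num.Theory.
Local Open Scope ring_scope.

(* Each hypothesis makes <.,.>_2 preserve equality of <.,.>_1-norms. For (4)
   this is because ||x|| = ||y|| iff x + y and x - y are orthogonal; (3) and
   (5) with theta0 = pi/2 are instances of (4); for theta0 <> pi/2, when u, v
   are orthogonal of equal norm the vectors cos theta0 u +- sin theta0 v both
   make the angle theta0 with u, which forces u, v to stay orthogonal. A form
   preserving equality of norms is a multiple of the other on the diagonal,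
   hence everywhere by polarization, and the common nonzero vector of equal
   norms fixes the factor to 1. *)

Section InnerProduct.
Context {R : realType} {V : lmodType R} {ip : V -> V -> R}.
Hypothesis ipP : is_inner_product ip.

Lemma ipC x y : ip x y = ip y x.
Proof. by case: ipP. Qed.

Lemma ip_gt0 {x} : x != 0 -> 0 < ip x x.
Proof. by case: ipP => _ _; apply. Qed.

Lemma ipDl x y z : ip (x + y) z = ip x z + ip y z.
Proof. by case: ipP => _ ipL _; rewrite -{1}[x]scale1r ipL mul1r. Qed.

Lemma ip0l z : ip 0 z = 0.
Proof. by have := ipDl 0 0 z; rewrite addr0; lra. Qed.

Lemma ipZl a x z : ip (a *: x) z = a * ip x z.
Proof. by case: ipP => _ ipL _; rewrite -[a *: x]addr0 ipL ip0l addr0. Qed.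

Lemma ipNl x z : ip (- x) z = - ip x z.
Proof. by rewrite -scaleN1r ipZl mulN1r. Qed.

Lemma ipDr x y z : ip z (x + y) = ip z x + ip z y.
Proof. by rewrite ipC ipDl !(ipC z). Qed.

Lemma ipZr a x z : ip z (a *: x) = a * ip z x.
Proof. by rewrite ipC ipZl (ipC z). Qed.

Lemma ipNr x z : ip z (- x) = - ip z x.
Proof. by rewrite ipC ipNl (ipC z). Qed.

Lemma ipBr x y z : ip z (x - y) = ip z x - ip z y.
Proof. by rewrite ipDr ipNr. Qed.

Lemma ip_ge0 x : 0 <= ip x x.
Proof. by have [->|/ip_gt0/ltW//] := eqVneq x 0; rewrite ip0l. Qed.

Lemma ip_sqrD x y : ip (x + y) (x + y) = ip x x + 2 * ip x y + ip y y.
Proof. by rewrite ipDl !ipDr (ipC y x); ring. Qed.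

Lemma ip_sqrZ a x : ip (a *: x) (a *: x) = a ^+ 2 * ip x x.
Proof. by rewrite ipZl ipZr mulrA -expr2. Qed.

Lemma ipnorm_sqr x : ipnorm ip x ^+ 2 = ip x x.
Proof. by rewrite sqr_sqrtr ?ip_ge0. Qed.

Lemma ipnorm_gt0 {x} : x != 0 -> 0 < ipnorm ip x.
Proof. by move=> x0; rewrite sqrtr_gt0 ip_gt0. Qed.

Lemma ip_CauchySchwarz x y : ip x y ^+ 2 <= ip x x * ip y y.
Proof.
have [->|x0] := eqVneq x 0; first by rewrite !ip0l expr2 !mul0r.
have xx0 := ip_gt0 x0.
pose t := - ip x y / ip x x.
have key : ip x x * ip (t *: x + y) (t *: x + y) = ip x x * ip y y - ip x y ^+ 2.
  by rewrite ip_sqrD ip_sqrZ ipZl /t; field; rewrite gt_eqF.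
by rewrite -subr_ge0 -key mulr_ge0 ?ip_ge0 ?ltW.
Qed.

Lemma normr_ip_le x y : `|ip x y| <= ipnorm ip x * ipnorm ip y.
Proof.
rewrite -ler_sqr ?nnegrE ?mulr_ge0 ?sqrtr_ge0 //.
by rewrite real_normK ?num_real // exprMn !ipnorm_sqr ip_CauchySchwarz.
Qed.

Lemma cos_ipangle {x y} : x != 0 -> y != 0 ->
  ip x y = cos (ipangle ip x y) * (ipnorm ip x * ipnorm ip y).
Proof.
move=> x0 y0; have n0 := mulr_gt0 (ipnorm_gt0 x0) (ipnorm_gt0 y0).
rewrite /ipangle acosK ?mulfVK ?gt_eqF // in_itv /= -ler_norml.
by rewrite normrM normfV (gtr0_norm n0) ler_pdivrMr // mul1r normr_ip_le.
Qed.

Lemma ipangle_cos x y th : 0 <= th <= pi -> x != 0 -> y != 0 ->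
  ip x y = cos th * (ipnorm ip x * ipnorm ip y) -> ipangle ip x y = th.
Proof.
move=> th_itv x0 y0 exy; rewrite /ipangle exy mulfK ?cosK //.
by rewrite mulf_neq0 // gt_eqF // ipnorm_gt0.
Qed.

Lemma exists_scale_ip_sqr {x y} : x != 0 -> y != 0 ->
  exists2 t : R, 0 < t & ip (t *: y) (t *: y) = ip x x.
Proof.
move=> /ip_gt0 x0 /ip_gt0 y0; have q0 : 0 < ip x x / ip y y by rewrite divr_gt0.
exists (Num.sqrt (ip x x / ip y y)); first by rewrite sqrtr_gt0.
by rewrite ip_sqrZ sqr_sqrtr ?ltW // divfK ?gt_eqF.
Qed.

End InnerProduct.

Section TwoInnerProducts.
Context {R : realType} {V : lmodType R} {ip1 ip2 : V -> V -> R}.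
Hypotheses (ip1P : is_inner_product ip1) (ip2P : is_inner_product ip2).

Definition preserves_norm_equality :=
  forall x y, ip1 x x = ip1 y y -> ip2 x x = ip2 y y.

Definition preserves_orthogonality :=
  forall u v, u != 0 -> v != 0 -> ip1 u v = 0 -> ip2 u v = 0.

Definition preserves_equinorm_orthogonality :=
  forall u v, u != 0 -> ip1 u u = ip1 v v -> ip1 u v = 0 -> ip2 u v = 0.

Definition preserves_angle (th : R) :=
  forall u v, u != 0 -> v != 0 -> ipangle ip1 u v = th -> ipangle ip2 u v = th.

Lemma ip_eq_of_preserves_norm_equality : preserves_norm_equality ->
  (exists x, x != 0 /\ ipnorm ip1 x = ipnorm ip2 x) -> forall x y, ip1 x y = ip2 x y.
Proof.
move=> P [x0 [x0_neq0 n_x0]].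
have e_x0 : ip1 x0 x0 = ip2 x0 x0 by rewrite -(ipnorm_sqr ip1P) -(ipnorm_sqr ip2P) n_x0.
have diag y : ip1 y y = ip2 y y.
  have [->|y0] := eqVneq y 0; first by rewrite (ip0l ip1P) (ip0l ip2P).
  have [t t0 ety] := exists_scale_ip_sqr ip1P x0_neq0 y0.
  have := P _ _ ety; rewrite !(ip_sqrZ ip2P) -e_x0 -ety (ip_sqrZ ip1P).
  by move/(mulfI (expf_neq0 2 (lt0r_neq0 t0))) ->.
move=> x y; have := ip_sqrD ip1P x y; have := ip_sqrD ip2P x y; rewrite -!diag; lra.
Qed.

Lemma preserves_norm_equality_of_orthogonality :
  preserves_orthogonality -> preserves_norm_equality.
Proof.
move=> O x y exy.
have [sum0|sum_neq0] := eqVneq (x + y) 0.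
  by rewrite -(addr0_eq sum0) (ipNl ip2P) (ipNr ip2P) opprK.
have [/eqP|diff_neq0] := eqVneq (x - y) 0; first by rewrite subr_eq0 => /eqP ->.
have := O _ _ sum_neq0 diff_neq0.
rewrite (ipDl ip1P) !(ipBr ip1P) (ipDl ip2P) !(ipBr ip2P) (ipC ip1P y x) (ipC ip2P y x) exy.
by move/(_ ltac:(ring)); lra.
Qed.

Lemma preserves_orthogonality_of_equinorm :
  preserves_equinorm_orthogonality -> preserves_orthogonality.
Proof.
move=> O u v u0 v0 uv.
have [t t0 etv] := exists_scale_ip_sqr ip1P u0 v0.
have := O _ _ u0 (esym etv); rewrite !(ipZr ip1P) (ipZr ip2P) uv mulr0.
by move=> /(_ erefl) /eqP; rewrite mulf_eq0 gt_eqF // => /eqP.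
Qed.

Lemma preserves_orthogonality_of_angle_pihalf :
  preserves_angle (pi / 2) -> preserves_orthogonality.
Proof.
have pihalf_itv : 0 <= @pi R / 2 <= pi.
  by apply/andP; split; have := pi_gt0 R; lra.
move=> S u v u0 v0 uv.
have : ipangle ip1 u v = pi / 2 by apply: ipangle_cos; rewrite // cos_pihalf mul0r.
by move/(S _ _ u0 v0)=> angle2; rewrite (cos_ipangle ip2P u0 v0) angle2 cos_pihalf mul0r.
Qed.

Section NonrightAngle.
Context {th : R}.
Hypotheses (th_itv : 0 < th < pi) (cos_neq0 : cos th != 0) (S : preserves_angle th).

(* For <.,.>_1-orthogonal u, v of equal norm, w = cos th u + g v with
   g^2 = sin th^2 makes the <.,.>_1-angle th with u; squaring the resulting
   identity ip2 u w = cos th ||u||_2 ||w||_2 avoids square roots. *)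
Lemma preserved_angle_identity {u v} g : u != 0 -> ip1 u u = ip1 v v -> ip1 u v = 0 ->
  g ^+ 2 = sin th ^+ 2 ->
  (cos th * ip2 u u + g * ip2 u v) ^+ 2 = cos th ^+ 2 * (ip2 u u *
    (cos th ^+ 2 * ip2 u u + 2 * (cos th * g * ip2 u v) + g ^+ 2 * ip2 v v)).
Proof.
move=> u0 euv uv g2; pose w := cos th *: u + g *: v.
have uw : ip1 u w = cos th * ip1 u u by rewrite (ipDr ip1P) !(ipZr ip1P) uv mulr0 addr0.
have ww : ip1 w w = ip1 u u.
  rewrite (ip_sqrD ip1P) !(ip_sqrZ ip1P) (ipZl ip1P) (ipZr ip1P) uv -euv g2.
  by rewrite !mulr0 addr0 -mulrDl cos2Dsin2 mul1r.
have w0 : w != 0.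
  apply/eqP => w_eq0; move: ww; rewrite w_eq0 (ip0l ip1P) => /esym/eqP.
  by rewrite gt_eqF ?(ip_gt0 ip1P u0).
have /(S _ _ u0 w0) angle2 : ipangle ip1 u w = th.
  apply: ipangle_cos => //; first by case/andP: th_itv => *; rewrite !ltW.
  by rewrite uw /ipnorm ww -expr2 sqr_sqrtr ?(ip_ge0 ip1P).
have := cos_ipangle ip2P u0 w0; rewrite angle2 => /(congr1 (fun r => r ^+ 2)).
rewrite 2!exprMn !(ipnorm_sqr ip2P) (ipDr ip2P) !(ipZr ip2P) => ->.
rewrite (ip_sqrD ip2P) !(ip_sqrZ ip2P) (ipZl ip2P) (ipZr ip2P).
by rewrite (mulrA (cos th) g).
Qed.

Lemma preserves_equinorm_orthogonality_of_angle : preserves_equinorm_orthogonality.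
Proof.
move=> u v u0 euv uv.
have plus := preserved_angle_identity (sin th) u0 euv uv erefl.
have minus := preserved_angle_identity (- sin th) u0 euv uv (sqrrN _).
have sin_cube : sin th ^+ 3 = sin th * (1 - cos th ^+ 2).
  by rewrite -(cos2Dsin2 th); ring.
(* The difference of the identities for g = sin th and g = - sin th. *)
have : 4 * (cos th * sin th ^+ 3 * ip2 u u) * ip2 u v = 0 by rewrite sin_cube; nra.
have sin_neq0 : sin th != 0 by rewrite gt_eqF // sin_gt0_pi.
apply: contra_eq => b0; rewrite !mulf_neq0 ?expf_neq0 ?pnatr_eq0 //.
by rewrite gt_eqF ?(ip_gt0 ip2P u0).
Qed.

End NonrightAngle.

End TwoInnerProducts.

Theorem mainTheorem7 (R : realType) (V : lmodType R) (ip1 ip2 : V -> V -> R) :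
  is_inner_product ip1 -> is_inner_product ip2 ->
  (   (exists c : R, 0 < c /\ forall x y, ip2 x y = c * ip1 x y)
   \/ (exists c : R, 0 < c /\ forall x, ipnorm ip2 x = c * ipnorm ip1 x)
   \/ (forall x y, x != 0 -> y != 0 -> ipangle ip1 x y = ipangle ip2 x y)
   \/ (forall x y, x != 0 -> y != 0 -> (ip1 x y = 0 <-> ip2 x y = 0))
   \/ (exists theta0 : R, 0 < theta0 < pi /\
         forall x y, x != 0 -> y != 0 ->
           (ipangle ip1 x y = theta0 <-> ipangle ip2 x y = theta0))) ->
  (exists x : V, x != 0 /\ ipnorm ip1 x = ipnorm ip2 x) ->
  forall x y, ip1 x y = ip2 x y.
Proof.
move=> ip1P ip2P hyp common.
apply: (ip_eq_of_preserves_norm_equality ip1P ip2P _ common).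
have of_orth := preserves_norm_equality_of_orthogonality ip1P ip2P.
have of_pihalf := preserves_orthogonality_of_angle_pihalf ip1P ip2P.
case: hyp => [[c [_ e]]|[[c [_ e]]|[angle|[orth|[th [th_itv S]]]]]].
- by move=> x y exy; rewrite !e exy.
- by move=> x y; rewrite -!(ipnorm_sqr ip1P) -!(ipnorm_sqr ip2P) !e !exprMn => ->.
- by apply/of_orth/of_pihalf => u v u0 v0; rewrite angle.
- by apply: of_orth => u v u0 v0 /(orth _ _ u0 v0).
have [cos0|cos_neq0] := eqVneq (cos th) 0.
- have th_pihalf : th = pi / 2.
    by rewrite -acos0 -cos0 cosK // in_itv /=; case/andP: th_itv => *; rewrite !ltW.
  by apply/of_orth/of_pihalf; rewrite -th_pihalf => u v u0 v0 /(S _ _ u0 v0).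
apply/of_orth/(preserves_orthogonality_of_equinorm ip1P ip2P).
apply: (preserves_equinorm_orthogonality_of_angle ip1P ip2P th_itv cos_neq0).
by move=> u v u0 v0 /(S _ _ u0 v0).
Qed.
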